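(* Let $p>p_0\geq 1$ be integers and let $f_n\in C[0,1]^p$. Define $\beta_0\in\mathbb{R}$ and $\boldsymbol{\beta}=(\beta_1,\ldots,\beta_p)'\in\mathbb{R}^p$ (the best linear approximation of $f_n$) by $$\beta_0+\boldsymbol{\beta}'\mathbf{x}=\mathop{\arg\min}_{g\in\{\phi_0+\boldsymbol{\phi}'\mathbf{x}:\ \phi_0\in\mathbb{R},\ \boldsymbol{\phi}\in\mathbb{R}^p\}}\int_{[0,1]^p}\left[f_n(\mathbf{x})-g(\mathbf{x})\right]^2d\mathbf{x}.$$ Suppose there exist $\widetilde{f}_n\in C[0,1]^{p_0}$ and $\eta_n>0$ such that $$\sup_{(x_1,\ldots,x_p)'\in[0,1]^p}\left|f_n(x_1,\ldots,x_p)-\widetilde{f}_n(x_1,\ldots,x_{p_0})\right|<\eta_n,$$ and a positive constant $\tau$ such that for each $j=1,\ldots,p_0$, $$\left|\int_{[0,1]^p}x_jf_n(\mathbf{x})d\mathbf{x}-\frac12\int_{[0,1]^p}f_n(\mathbf{x})d\mathbf{x}\right|>\tau.$$ Then $|\beta_j|<12\eta_n$ for $j=p_0+1,\ldots,p$, and $|\beta_j|>12\tau$ for $j=1,\ldots,p_0$.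
   Context: $\mathbf{x}=(x_1,\ldots,x_p)'$ and $C[0,1]^d$ denotes the continuous real functions on $[0,1]^d$. *)

From HB Require Import structures.
From mathcomp Require Import all_boot all_order all_algebra.
From mathcomp Require Import all_classical all_reals all_analysis.

Set Implicit Arguments.
Unset Strict Implicit.
Unset Printing Implicit Defensive.

Import Order.TTheory GRing.Theory Num.Theory numFieldNormedType.Exports.
Local Open Scope classical_set_scope.
Local Open Scope ring_scope.

(* Points of [0,1]^n are row vectors x : 'rV[R]_n; coordinate x_{i+1} of the
   paper is x 0 i (0-based ordinal i). *)

Definition unit_cube (R : realType) (n : nat) : set 'rV[R]_n :=
  [set x | forall i : 'I_n, 0 <= x 0 i <= 1].

(* For continuous integrands this is the Lebesgue
   integral over the cube with respect to n-dimensional Lebesgue measure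
   (Fubini). *)
Fixpoint cube_integral (R : realType) (n : nat) : ('rV[R]_n -> R) -> R :=
  match n with
  | 0 => fun f => f 0
  | m.+1 => fun f =>
      Rintegral (@lebesgue_measure R) `[0%R, 1%R]%classic
        (fun t : R => @cube_integral R m (fun y : 'rV[R]_m => f (row_mx (\row_(_ < 1) t) y)))
  end.

Definition cube_prefix (R : realType) (k n : nat) (h : (k <= n)%N) (x : 'rV[R]_n)
  : 'rV[R]_k := \row_(i < k) x 0 (widen_ord h i).

Definition affine (R : realType) (n : nat) (phi0 : R) (phi : 'rV[R]_n)
  (x : 'rV[R]_n) : R := phi0 + \sum_(j < n) phi 0 j * x 0 j.

From HB Require Import structures.
From mathcomp Require Import all_boot all_order all_algebra.
From mathcomp Require Import all_classical all_reals all_analysis.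
From mathcomp Require Import ring lra.
Import Order.TTheory GRing.Theory Num.Theory numFieldNormedType.Exports.
Local Open Scope classical_set_scope.
Local Open Scope ring_scope.

(* The least-squares coefficients satisfy the normal equations.  The centred
   coordinates x_j - 1/2 are orthogonal to the constants and to each other, with
   \int x_j (x_j - 1/2) = 1/12, so the normal equation along x_j - 1/2 reads
   beta_j = 12 \int f (x_j - 1/2) = 12 (\int x_j f - 1/2 \int f), which settles the
   coordinates j <= p0.  For j > p0 the approximant ft does not depend on x_j, so
   \int ft (x_j - 1/2) = 0 and |beta_j| = 12 |\int (f - ft)(x_j - 1/2)|
   <= 6 sup |f - ft| < 12 eta. *)

Set Implicit Arguments.
Unset Strict Implicit.
Unset Printing Implicit Defensive.

Section UnitCube.
Variable R : realType.
Local Notation cube n := (@unit_cube R n).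
Local Notation I01 := (`[0%R, 1%R]%classic : set R).
Local Notation mu := (@lebesgue_measure R).

(** * Continuity on the unit cube *)

Definition rV_cons m (t : R) (y : 'rV[R]_m) : 'rV[R]_(1 + m) :=
  row_mx (\row_(_ < 1) t) y.

Lemma rV_cons_head m t (y : 'rV[R]_m) : rV_cons t y 0 (ord0 : 'I_(1 + m)) = t.
Proof.
rewrite /rV_cons (_ : ord0 = lshift m (ord0 : 'I_1)); last exact: val_inj.
by rewrite row_mxEl mxE.
Qed.

Lemma rV_cons_lift m t (y : 'rV[R]_m) (i : 'I_m) :
  rV_cons t y 0 (lift ord0 i : 'I_(1 + m)) = y 0 i.
Proof.
rewrite /rV_cons (_ : lift ord0 i = rshift 1 i); last exact: val_inj.
by rewrite row_mxEr.
Qed.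

Lemma rV_cons_rel m (Q : R -> R -> Prop) t t' (y y' : 'rV[R]_m) :
  Q t t' -> (forall j, Q (y 0 j) (y' 0 j)) ->
  forall i, Q (rV_cons t y 0 i) (rV_cons t' y' 0 i).
Proof.
move=> Qt Qy i; case: (unliftP ord0 i) => [j ->|->]; first by rewrite !rV_cons_lift.
by rewrite !rV_cons_head.
Qed.

Lemma unit_cube0 n : cube n 0.
Proof. by move=> i; rewrite mxE lexx ler01. Qed.

Lemma rV_cons_cube m t (y : 'rV[R]_m) : I01 t -> cube m y -> cube (1 + m) (rV_cons t y).
Proof.
by move=> t01 y01; apply: (rV_cons_rel (Q := fun a _ => 0 <= a <= 1)).
Qed.

Lemma unit_cube_compact n : compact (cube n).
Proof.
have -> : cube n = [set v : 'rV[R]_n | forall i, I01 (v ord0 i)].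
  by apply: funext => v; apply: propext; split => H i; have := H i; rewrite /= in_itv.
exact: (@rV_compact R n (fun _ => I01) (fun _ => @segment_compact R 0 1)).
Qed.

Lemma ball_rVE n (x y : 'rV[R]_n) d :
  ball x d y <-> 0 < d /\ forall i, `|x 0 i - y 0 i| < d.
Proof.
rewrite /ball /=; split => [[d0 H]|[d0 H]]; split => //.
  by move=> i; exact: H.
by move=> i j; rewrite (ord1 i); exact: H.
Qed.

Lemma cube_continuousP n (g : 'rV[R]_n -> R) :
  {within cube n, continuous g} <->
  forall x, cube n x -> forall e, 0 < e -> exists2 d, 0 < d &
    forall y, cube n y -> (forall i, `|x 0 i - y 0 i| < d) -> `|g x - g y| < e.
Proof.
split => [/subspace_continuousP gc x x01 e e0 | gc].
  have /cvgrPdist_lt /(_ e e0) /nbhs_ballP [d /= d0 gd] := gc x x01.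
  by exists d => // y y01 xy; apply: gd => //; apply/ball_rVE.
apply/subspace_continuousP => x x01; apply/cvgrPdist_lt => e e0.
have [d d0 gd] := gc x x01 e e0.
by apply/nbhs_ballP; exists d => //= y /ball_rVE [_ xy] y01; exact: gd.
Qed.

Lemma cube_continuous_cst n (c : R) : {within cube n, continuous (fun _ => c)}.
Proof. by move=> x; exact: cvg_cst. Qed.

Lemma cube_continuous_coord n (i : 'I_n) :
  {within cube n, continuous (fun x : 'rV[R]_n => x 0 i)}.
Proof. by apply: continuous_subspaceT => x; exact: coord_continuous. Qed.

Lemma cube_continuousD n (g h : 'rV[R]_n -> R) :
  {within cube n, continuous g} -> {within cube n, continuous h} ->
  {within cube n, continuous (fun x => g x + h x)}.
Proof. by move=> gc hc x; apply: cvgD; [exact: gc | exact: hc]. Qed.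

Lemma cube_continuousB n (g h : 'rV[R]_n -> R) :
  {within cube n, continuous g} -> {within cube n, continuous h} ->
  {within cube n, continuous (fun x => g x - h x)}.
Proof. by move=> gc hc x; apply: cvgB; [exact: gc | exact: hc]. Qed.

Lemma cube_continuousM n (g h : 'rV[R]_n -> R) :
  {within cube n, continuous g} -> {within cube n, continuous h} ->
  {within cube n, continuous (fun x => g x * h x)}.
Proof. by move=> gc hc x; apply: cvgM; [exact: gc | exact: hc]. Qed.

Lemma cube_continuous_comp n (g : 'rV[R]_n -> R) (u : R -> R) :
  {within cube n, continuous g} -> continuous u ->
  {within cube n, continuous (fun x => u (g x))}.
Proof. by move=> gc uc x; exact: cvg_comp (gc x) (uc _). Qed.

Lemma center_continuous : continuous (fun t : R => t - 2^-1).
Proof. by move=> t; apply: cvgB; [exact: cvg_id | exact: cvg_cst]. Qed.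

Lemma cube_continuous_center n (j : 'I_n) :
  {within cube n, continuous (fun x : 'rV[R]_n => x 0 j - 2^-1)}.
Proof. by apply: cube_continuousB; [exact: cube_continuous_coord | exact: cube_continuous_cst]. Qed.

Lemma cube_continuous_sum n k (F : 'I_k -> 'rV[R]_n -> R) :
  (forall j, {within cube n, continuous (F j)}) ->
  {within cube n, continuous (fun x => \sum_(j < k) F j x)}.
Proof. by move=> Fc x; apply: cvg_big => [|j _]; [exact: add_continuous | exact: Fc]. Qed.

Lemma cube_continuous_affine n b0 (b : 'rV[R]_n) : {within cube n, continuous (affine b0 b)}.
Proof.
apply: cube_continuousD; first exact: cube_continuous_cst.
by apply: cube_continuous_sum => j; apply: cube_continuousM;
  [exact: cube_continuous_cst | exact: cube_continuous_coord].
Qed.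

Lemma cube_continuous_rV_cons m (g : 'rV[R]_(1 + m) -> R) t :
  {within cube (1 + m), continuous g} -> I01 t ->
  {within cube m, continuous (fun y => g (rV_cons t y))}.
Proof.
move=> /cube_continuousP gc t01; apply/cube_continuousP => y y01 e e0.
have [d d0 gd] := gc _ (rV_cons_cube t01 y01) e e0.
exists d => // y' y'01 yy'; apply: gd; first exact: rV_cons_cube.
by apply: (rV_cons_rel (Q := fun a b => `|a - b| < d)) => //; rewrite subrr normr0.
Qed.

Lemma cube_continuous_prefix k n (kn : (k <= n)%N) (g : 'rV[R]_k -> R) :
  {within cube k, continuous g} ->
  {within cube n, continuous (fun x => g (cube_prefix kn x))}.
Proof.
move=> /cube_continuousP gc; apply/cube_continuousP => x x01 e e0.
have prefix01 y : cube n y -> cube k (cube_prefix kn y) by move=> y01 i; rewrite mxE.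
have [d d0 gd] := gc _ (prefix01 _ x01) e e0.
exists d => // y y01 xy; apply: gd => [|i]; first exact: prefix01.
by rewrite !mxE.
Qed.

Lemma cube_continuous_le_sup n (g : 'rV[R]_n -> R) x :
  {within cube n, continuous g} -> cube n x ->
  g x <= sup [set g y | y in cube n].
Proof.
move=> gc x01; apply: sup_upper_bound; last by exists x.
apply: compact_has_sup; first by exists (g x), x.
by have := continuous_compact gc (@unit_cube_compact n); apply.
Qed.

Lemma rV_cons_near_uniform m (g : 'rV[R]_(1 + m) -> R) t0 e :
  {within cube (1 + m), continuous g} -> I01 t0 -> 0 < e ->
  \forall t \near within I01 (nbhs t0), forall y, cube m y ->
    I01 t /\ `|g (rV_cons t y) - g (rV_cons t0 y)| <= e.
Proof.
move=> /cube_continuousP gc t01 e0.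
have e20 : 0 < e / 2 by rewrite divr_gt0.
(* Compactness of the cube makes the continuity of [g] uniform in [y]. *)
have cover : near_covering_within (cube m).
  by apply/near_covering_withinP/compact_near_coveringP; exact: unit_cube_compact.
apply: (cover R _ _ (within_filter _ _)) => y y01.
have [d d0 gd] := gc _ (rV_cons_cube t01 y01) _ e20.
exists (ball y d, [set t | I01 t /\ `|t0 - t| < d]) => /=.
  split; first by apply/nbhs_ballP; exists d.
  by apply/nbhs_ballP; exists d => // t /= tt0 t01'; split.
case=> y' t /= [/ball_rVE [_ yy'] [t'01 tt0]] y'01; split => //.
have t0t0 : `|t0 - t0| < d by rewrite subrr normr0.
have near_t := gd _ (rV_cons_cube t'01 y'01)
  (rV_cons_rel (Q := fun a b => `|a - b| < d) tt0 yy').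
have near_t0 := gd _ (rV_cons_cube t01 y'01)
  (rV_cons_rel (Q := fun a b => `|a - b| < d) t0t0 yy').
rewrite (_ : g (rV_cons t y') - g (rV_cons t0 y') =
  (g (rV_cons t0 y) - g (rV_cons t0 y')) - (g (rV_cons t0 y) - g (rV_cons t y'))); last by ring.
by apply: le_trans (ler_normB _ _) _; lra.
Qed.

(** * The iterated integral over the unit cube *)

Lemma Rintegral01_cst (c : R) : \int[mu]_(x in I01) c = c.
Proof.
by rewrite Rintegral_cst //= lebesgue_measure_itv /= lte_fin ltr01 /= subr0 mulr1.
Qed.

Lemma integrable01 (F : R -> R) :
  {within I01, continuous F} -> mu.-integrable I01 (EFin \o F).
Proof. by move=> Fc; apply: continuous_compact_integrable => //; exact: segment_compact. Qed.

Lemma cube_integralS m (g : 'rV[R]_(1 + m) -> R) :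
  cube_integral g = \int[mu]_(t in I01) cube_integral (fun y => g (rV_cons t y)).
Proof. by []. Qed.

Lemma cube_integral_cst n (c : R) : cube_integral (fun _ : 'rV[R]_n => c) = c.
Proof. by elim: n => [//|m IH]; rewrite cube_integralS IH Rintegral01_cst. Qed.

Lemma eq_cube_integral n (g h : 'rV[R]_n -> R) :
  g =1 h -> cube_integral g = cube_integral h.
Proof. by move=> /funext ->. Qed.

(* [cube_integral] is an iterated integral, so its laws on continuous functions
   are proved by induction on the dimension, together with the continuity of
   [t |-> \int g (t, y) dy] that makes the outer integrand integrable. *)
Definition cube_integral_laws n := [/\
  forall g h : 'rV[R]_n -> R,
    {within cube n, continuous g} -> {within cube n, continuous h} ->
    cube_integral (fun x => g x + h x) = cube_integral g + cube_integral h,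
  forall c (g : 'rV[R]_n -> R), {within cube n, continuous g} ->
    cube_integral (fun x => c * g x) = c * cube_integral g &
  forall g h : 'rV[R]_n -> R,
    {within cube n, continuous g} -> {within cube n, continuous h} ->
    (forall x, cube n x -> g x <= h x) -> cube_integral g <= cube_integral h].

Section InductionStep.
Variables (m : nat) (laws : cube_integral_laws m).

Lemma cube_integral_dist_le (g h : 'rV[R]_m -> R) e :
  {within cube m, continuous g} -> {within cube m, continuous h} ->
  (forall x, cube m x -> `|g x - h x| <= e) ->
  `|cube_integral g - cube_integral h| <= e.
Proof.
case: laws => integralD _ le_integral gc hc gh.
have ec : {within cube m, continuous (fun _ => e)} by exact: cube_continuous_cst.
have le_shift (u v : 'rV[R]_m -> R) :
    {within cube m, continuous u} -> {within cube m, continuous v} ->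
    (forall x, cube m x -> u x - v x <= e) -> cube_integral u <= cube_integral v + e.
  move=> uc vc uv; rewrite -(cube_integral_cst m e) -integralD //.
  by apply: le_integral => [||x /uv]; [| exact: cube_continuousD | lra].
apply/ler_normlP; split.
  suff : cube_integral h <= cube_integral g + e by lra.
  by apply: le_shift => // x /gh /ler_normlP[]; lra.
suff : cube_integral g <= cube_integral h + e by lra.
by apply: le_shift => // x /gh /ler_normlP[]; lra.
Qed.

Lemma cube_integral_rV_cons_continuous (g : 'rV[R]_(1 + m) -> R) :
  {within cube (1 + m), continuous g} ->
  {within I01, continuous (fun t => cube_integral (fun y => g (rV_cons t y)))}.
Proof.
move=> gc; apply/subspace_continuousP => t0 t01; apply/cvgrPdist_lt => e e0.
have e20 : 0 < e / 2 by rewrite divr_gt0.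
near=> t.
have close : forall y, cube m y ->
    I01 t /\ `|g (rV_cons t y) - g (rV_cons t0 y)| <= e / 2.
  by near: t; exact: rV_cons_near_uniform.
have [t'01 _] := close _ (@unit_cube0 m).
apply: le_lt_trans (cube_integral_dist_le (cube_continuous_rV_cons gc t01)
  (cube_continuous_rV_cons gc t'01) (e := e / 2) _) _; last lra.
by move=> y /close [_]; rewrite distrC.
Unshelve. all: by end_near.
Qed.

End InductionStep.

Lemma cube_integral_lawsP n : cube_integral_laws n.
Proof.
elim: n => [|m IH]; first by split=> // g h _ _; apply; exact: unit_cube0.
have [integralD integralZ le_integral] := IH.
have slice_integrable (g : 'rV[R]_(1 + m) -> R) :
    {within cube (1 + m), continuous g} ->
    mu.-integrable I01 (EFin \o (fun t => cube_integral (fun y => g (rV_cons t y)))).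
  by move=> gc; apply: integrable01; exact: cube_integral_rV_cons_continuous.
split.
- move=> g h gc hc; rewrite !cube_integralS -RintegralD //; try exact: slice_integrable.
  apply: eq_Rintegral => t /set_mem t01 /=.
  by rewrite integralD //; exact: cube_continuous_rV_cons.
- move=> c g gc; rewrite !cube_integralS -RintegralZl //; last exact: slice_integrable.
  apply: eq_Rintegral => t /set_mem t01 /=.
  by rewrite integralZ //; exact: cube_continuous_rV_cons.
- move=> g h gc hc gh; rewrite !cube_integralS.
  apply: le_Rintegral => //; try exact: slice_integrable.
  move=> t t01; apply: le_integral; try exact: cube_continuous_rV_cons.
  by move=> y y01; apply: gh; exact: rV_cons_cube.
Qed.

Section Linearity.
Variables (n : nat) (g h : 'rV[R]_n -> R).
Hypotheses (gc : {within cube n, continuous g}) (hc : {within cube n, continuous h}).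

Lemma cube_integralD :
  cube_integral (fun x => g x + h x) = cube_integral g + cube_integral h.
Proof. by case: (cube_integral_lawsP n) => + _ _; apply. Qed.

Lemma cube_integralZl c : cube_integral (fun x => c * g x) = c * cube_integral g.
Proof. by case: (cube_integral_lawsP n) => _ + _; apply. Qed.

Lemma le_cube_integral :
  (forall x, cube n x -> g x <= h x) -> cube_integral g <= cube_integral h.
Proof. by case: (cube_integral_lawsP n) => _ _; apply. Qed.

End Linearity.

Lemma cube_integralB n (g h : 'rV[R]_n -> R) :
  {within cube n, continuous g} -> {within cube n, continuous h} ->
  cube_integral (fun x => g x - h x) = cube_integral g - cube_integral h.
Proof.
move=> gc hc; have hNc : {within cube n, continuous (fun x => -1 * h x)}.
  by apply: cube_continuousM => //; exact: cube_continuous_cst.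
rewrite -mulN1r -cube_integralZl // -cube_integralD //.
by apply: eq_cube_integral => x; rewrite mulN1r.
Qed.

Lemma cube_integral_sum n k (F : 'I_k -> 'rV[R]_n -> R) :
  (forall j, {within cube n, continuous (F j)}) ->
  cube_integral (fun x => \sum_(j < k) F j x) = \sum_(j < k) cube_integral (F j).
Proof.
elim: k F => [|k IH] F Fc.
  rewrite big_ord0 -[RHS](cube_integral_cst n).
  by apply: eq_cube_integral => x; rewrite big_ord0.
have headc : {within cube n, continuous (fun x => \sum_(j < k) F (widen_ord (leqnSn k) j) x)}.
  by apply: cube_continuous_sum => j; exact: Fc.
rewrite big_ord_recr /= -IH // -cube_integralD //.
by apply: eq_cube_integral => x; rewrite big_ord_recr.
Qed.

(** * Moments of the centred coordinates *)

Definition coord_free n (j : 'I_n) (g : 'rV[R]_n -> R) :=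
  forall x y : 'rV[R]_n, (forall i, i != j -> x 0 i = y 0 i) -> g x = g y.

Lemma coord_free_prefix k n (kn : (k <= n)%N) (g : 'rV[R]_k -> R) (j : 'I_n) :
  (k <= j)%N -> coord_free j (fun x => g (cube_prefix kn x)).
Proof.
move=> kj x y xy; congr g; apply/rowP => i; rewrite !mxE; apply: xy.
by rewrite -val_eqE /= neq_ltn (leq_trans (ltn_ord i) kj).
Qed.

Lemma cube_integral_factor_coord n (j : 'I_n) (g : 'rV[R]_n -> R) (h : R -> R) :
  {within cube n, continuous g} -> continuous h -> coord_free j g ->
  cube_integral (fun x => g x * h (x 0 j)) =
    (\int[mu]_(t in I01) h t) * cube_integral g.
Proof.
elim: n j g => [|m IH] j g gc hc gj; first by have := ltn_ord j; rewrite ltn0.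
have h_int : mu.-integrable I01 (EFin \o h).
  by apply: integrable01; exact: continuous_subspaceT.
have g_slice_int : mu.-integrable I01
    (EFin \o (fun t => cube_integral (fun y => g (rV_cons t y)))).
  by apply/integrable01/cube_integral_rV_cons_continuous => //; exact: cube_integral_lawsP.
rewrite !cube_integralS; case: (unliftP ord0 j) gj => [j' ->|->] gj.
- rewrite -RintegralZl //; apply: eq_Rintegral => t /set_mem t01 /=.
  have slice_free : coord_free j' (fun y => g (rV_cons t y)).
    move=> x y xy; apply: gj => i; case: (unliftP ord0 i) => [i' ->|->].
      by rewrite !rV_cons_lift => ne; apply: xy; apply: contraNneq ne => ->.
    by rewrite !rV_cons_head.
  rewrite -(IH j' _ (cube_continuous_rV_cons gc t01) hc slice_free).
  by apply: eq_cube_integral => y; rewrite rV_cons_lift.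
- have g_head t y : g (rV_cons t y) = g (rV_cons 0 y).
    apply: gj => i; case: (unliftP ord0 i) => [i' ->|->]; first by rewrite !rV_cons_lift.
    by rewrite eqxx.
  have t0_01 : I01 0 by rewrite /= in_itv /= lexx ler01.
  transitivity (\int[mu]_(t in I01) (h t * cube_integral (fun y => g (rV_cons 0 y)))).
    apply: eq_Rintegral => t _ /=; rewrite -cube_integralZl; last exact: cube_continuous_rV_cons.
    by apply: eq_cube_integral => y; rewrite rV_cons_head g_head mulrC.
  rewrite RintegralZr //; congr (_ * _).
  rewrite -[LHS]Rintegral01_cst; apply: eq_Rintegral => t _ /=.
  by apply: eq_cube_integral => y; rewrite g_head.
Qed.

Lemma integrable01_onemX k : mu.-integrable I01 (EFin \o (fun t => (1 - t) ^+ k)).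
Proof.
apply/integrable01/continuous_subspaceT => t.
have onem_cont : {for t, continuous (fun t : R => 1 - t)}.
  by apply: continuousB; [exact: cvg_cst | exact: cvg_id].
exact: (continuous_comp onem_cont (@exprn_continuous R k _)).
Qed.

Lemma integrable01Zl c (F : R -> R) : mu.-integrable I01 (EFin \o F) ->
  mu.-integrable I01 (EFin \o (fun t => c * F t)).
Proof. by move=> Fi; apply: eq_integrable (integrableZl _ c Fi) => // t _ /=; rewrite EFinM. Qed.

Lemma Rintegral01_center : \int[mu]_(t in I01) (t - 2^-1) = 0.
Proof.
transitivity (\int[mu]_(t in I01) (2^-1 * (1 - t) ^+ 0 - (1 - t) ^+ 1)).
  by apply: eq_Rintegral => t _; rewrite expr0 expr1; field.
rewrite RintegralB ?RintegralZl ?Rintegral_onemXn //; try exact: integrable01_onemX.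
  by rewrite invr1 mulr1 subrr.
exact/integrable01Zl/integrable01_onemX.
Qed.

Lemma Rintegral01_mul_center : \int[mu]_(t in I01) (t * (t - 2^-1)) = 12^-1.
Proof.
transitivity (\int[mu]_(t in I01)
  ((1 - t) ^+ 2 - 3 / 2 * (1 - t) ^+ 1 + 2^-1 * (1 - t) ^+ 0)).
  by apply: eq_Rintegral => t _; rewrite expr0 expr1; field.
have onemXZ_int c k := integrable01Zl c (integrable01_onemX k).
rewrite RintegralD ?RintegralB ?RintegralZl ?Rintegral_onemXn //; try exact: integrable01_onemX.
  by field.
apply: eq_integrable (integrableB _ (integrable01_onemX 2) (onemXZ_int (3 / 2) 1%N)) => // t _.
Qed.

Lemma cube_integral_center n (j : 'I_n) :
  cube_integral (fun x : 'rV[R]_n => x 0 j - 2^-1) = 0.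
Proof.
rewrite -[LHS](eq_cube_integral (g := fun x => 1 * (x 0 j - 2^-1))) => [|x]; last by rewrite mul1r.
rewrite (cube_integral_factor_coord (g := fun _ => 1) (h := fun t => t - 2^-1))
  ?Rintegral01_center ?mul0r //.
  exact: cube_continuous_cst.
exact: center_continuous.
Qed.

Lemma cube_integral_coord_center n (k j : 'I_n) :
  cube_integral (fun x : 'rV[R]_n => x 0 k * (x 0 j - 2^-1)) = (k == j)%:R / 12.
Proof.
have [<-|kj] := eqVneq k j.
  rewrite -[LHS](eq_cube_integral (g := fun x => 1 * (x 0 k * (x 0 k - 2^-1)))) => [|x].
    rewrite (cube_integral_factor_coord (g := fun _ => 1) (h := fun t => t * (t - 2^-1))) //.
    - by rewrite Rintegral01_mul_center cube_integral_cst mulr1 mul1r.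
    - exact: cube_continuous_cst.
    - by move=> t; apply: cvgM; [exact: cvg_id | exact: center_continuous].
  by rewrite mul1r.
rewrite (cube_integral_factor_coord (g := fun x => x 0 k) (h := fun t => t - 2^-1))
  ?Rintegral01_center ?mul0r //.
- exact: cube_continuous_coord.
- exact: center_continuous.
- by move=> x y; apply.
Qed.

Lemma cube_integral_affine_center n b0 (b : 'rV[R]_n) (j : 'I_n) :
  cube_integral (fun x => affine b0 b x * (x 0 j - 2^-1)) = b 0 j / 12.
Proof.
have termc k : {within cube n, continuous (fun x => b 0 k * (x 0 k * (x 0 j - 2^-1)))}.
  apply: cube_continuousM; first exact: cube_continuous_cst.
  by apply: cube_continuousM; [exact: cube_continuous_coord | exact: cube_continuous_center].
rewrite -[LHS](eq_cube_integral (g := fun x =>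
  b0 * (x 0 j - 2^-1) + \sum_(k < n) b 0 k * (x 0 k * (x 0 j - 2^-1)))); last first.
  move=> x; rewrite /affine mulrDl big_distrl /=; congr (_ + _).
  by apply: eq_bigr => k _; rewrite mulrA.
rewrite cube_integralD ?cube_integralZl ?cube_integral_center ?cube_integral_sum //.
- have coefk k : cube_integral (fun x => b 0 k * (x 0 k * (x 0 j - 2^-1))) =
      b 0 k * ((k == j)%:R / 12).
    rewrite cube_integralZl ?cube_integral_coord_center //.
    by apply: cube_continuousM; [exact: cube_continuous_coord | exact: cube_continuous_center].
  rewrite mulr0 add0r (eq_bigr _ (fun k _ => coefk k)) (bigD1 j) //= eqxx big1 => [|k /negbTE ->].
    by rewrite addr0 mul1r.
  by rewrite mul0r mulr0.
- exact: cube_continuous_center.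
- by apply: cube_continuousM; [exact: cube_continuous_cst | exact: cube_continuous_center].
- exact: cube_continuous_sum.
Qed.

(** * Least-squares affine fit *)

Lemma coef_eq0_of_le_quadratic (A B : R) : 0 <= A -> (forall s, 2 * s * B <= s ^+ 2 * A) -> B = 0.
Proof.
move=> A0 quad; have A1 : 0 < A + 1 by lra.
pose s := B / (A + 1); have sA1 : s * (A + 1) = B by rewrite mulfVK ?gt_eqF.
have := quad s; rewrite -{1}sA1 => le_s.
have /eqP s0 : s == 0.
  by rewrite -sqrf_eq0 eq_le sqr_ge0 andbT; nra.
by rewrite -sA1 s0 mul0r.
Qed.

Lemma cube_integral_orthogonal n (r u : 'rV[R]_n -> R) :
  {within cube n, continuous r} -> {within cube n, continuous u} ->
  (forall s, cube_integral (fun x => r x ^+ 2) <=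
             cube_integral (fun x => (r x - s * u x) ^+ 2)) ->
  cube_integral (fun x => r x * u x) = 0.
Proof.
move=> rc uc rmin.
have r2c : {within cube n, continuous (fun x => r x ^+ 2)} by exact: cube_continuousM.
have u2c : {within cube n, continuous (fun x => u x ^+ 2)} by exact: cube_continuousM.
have ruc : {within cube n, continuous (fun x => r x * u x)} by exact: cube_continuousM.
apply: (@coef_eq0_of_le_quadratic (cube_integral (fun x => u x ^+ 2))) => [|s].
  rewrite -(cube_integral_cst n 0); apply: le_cube_integral => // [|x _].
    exact: cube_continuous_cst.
  exact: sqr_ge0.
have := rmin s; rewrite -[X in _ <= X](eq_cube_integral (g := fun x =>
  (r x ^+ 2 + (- 2 * s) * (r x * u x)) + s ^+ 2 * u x ^+ 2)) => [|x]; last by ring.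
rewrite cube_integralD ?cube_integralD ?cube_integralZl //.
- lra.
- by apply: cube_continuousM => //; exact: cube_continuous_cst.
- apply: cube_continuousD => //.
  by apply: cube_continuousM => //; exact: cube_continuous_cst.
- by apply: cube_continuousM => //; exact: cube_continuous_cst.
Qed.

Definition best_affine_fit n (f : 'rV[R]_n -> R) (b0 : R) (b : 'rV[R]_n) :=
  forall phi0 phi, cube_integral (fun x => (f x - affine b0 b x) ^+ 2)
    <= cube_integral (fun x => (f x - affine phi0 phi x) ^+ 2).

Lemma affine_shift n b0 (b : 'rV[R]_n) s (j : 'I_n) x :
  affine (b0 - s / 2) (b + s *: delta_mx 0 j) x =
    affine b0 b x + s * (x 0 j - 2^-1).
Proof.
rewrite /affine (eq_bigr (fun k => b 0 k * x 0 k + s * ((k == j)%:R * x 0 k))); last first.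
  by move=> k _; rewrite !mxE /=; ring.
have pick_j : \sum_(k < n) (k == j)%:R * x 0 k = x 0 j.
  by rewrite (bigD1 j) //= eqxx mul1r big1 ?addr0 // => k /negbTE ->; rewrite mul0r.
by rewrite big_split /= -mulr_sumr pick_j; field.
Qed.

Section BestAffineFit.
Variables (n : nat) (f : 'rV[R]_n -> R) (b0 : R) (b : 'rV[R]_n).
Hypotheses (fc : {within cube n, continuous f}) (fit : best_affine_fit f b0 b).

Lemma best_affine_coefE j :
  b 0 j = 12 * cube_integral (fun x => f x * (x 0 j - 2^-1)).
Proof.
have wc := cube_continuous_center (j := j).
have resc : {within cube n, continuous (fun x => f x - affine b0 b x)}.
  by apply: cube_continuousB => //; exact: cube_continuous_affine.
have normal_eq : cube_integral (fun x => (f x - affine b0 b x) * (x 0 j - 2^-1)) = 0.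
  apply: cube_integral_orthogonal resc wc _ => s.
  have := fit (b0 - s / 2) (b + s *: delta_mx 0 j).
  by under [X in _ <= X -> _]eq_cube_integral do rewrite affine_shift opprD addrA.
rewrite (eq_cube_integral (h := fun x =>
  f x * (x 0 j - 2^-1) - affine b0 b x * (x 0 j - 2^-1))) in normal_eq; last by move=> x; ring.
rewrite cube_integralB ?cube_integral_affine_center in normal_eq.
- lra.
- exact: cube_continuousM.
- by apply: cube_continuousM => //; exact: cube_continuous_affine.
Qed.

Lemma best_affine_coef_moment j :
  b 0 j = 12 * (cube_integral (fun x => x 0 j * f x) - 2^-1 * cube_integral f).
Proof.
rewrite best_affine_coefE -(cube_integralZl fc (2^-1)) -cube_integralB.
- by congr (_ * _); apply: eq_cube_integral => x; ring.
- by apply: cube_continuousM => //; exact: cube_continuous_coord.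
- by apply: cube_continuousM => //; exact: cube_continuous_cst.
Qed.

Lemma best_affine_coef_le_dist (h : 'rV[R]_n -> R) (j : 'I_n) S :
  {within cube n, continuous h} -> coord_free j h ->
  (forall x, cube n x -> `|f x - h x| <= S) -> `|b 0 j| <= 6 * S.
Proof.
move=> hc hj fhS.
have wc := cube_continuous_center (j := j).
have errc : {within cube n, continuous (fun x => (f x - h x) * (x 0 j - 2^-1))}.
  by apply: cube_continuousM => //; exact: cube_continuousB.
have err_eq : cube_integral (fun x => (f x - h x) * (x 0 j - 2^-1)) =
    cube_integral (fun x => f x * (x 0 j - 2^-1)).
  rewrite (eq_cube_integral
    (h := fun x => f x * (x 0 j - 2^-1) - h x * (x 0 j - 2^-1))) => [|x]; last by ring.
  rewrite cube_integralB; try exact: cube_continuousM.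
  rewrite (cube_integral_factor_coord (g := h) (h := fun t => t - 2^-1)) //.
    by rewrite Rintegral01_center mul0r subr0.
  exact: center_continuous.
have err_le : `|cube_integral (fun x => (f x - h x) * (x 0 j - 2^-1))| <= S / 2.
  rewrite -[X in `|X|]subr0 -(cube_integral_cst n 0).
  apply: (cube_integral_dist_le (cube_integral_lawsP n) errc) => [|x x01].
    exact: cube_continuous_cst.
  have : `|x 0 j - 2^-1| <= 2^-1 by have /andP[] := x01 j; rewrite ler_norml; lra.
  have := fhS x x01; have := normr_ge0 (f x - h x); rewrite subr0 normrM; nra.
by rewrite best_affine_coefE normrM ger0_norm // -err_eq; lra.
Qed.

End BestAffineFit.

End UnitCube.

Theorem theorem1 (R : realType) (p p0 : nat) (hp0 : (1 <= p0)%N)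
  (hpp0 : (p0 < p)%N)
  (f : 'rV[R]_p -> R) (hf : {within @unit_cube R p, continuous f})
  (beta0 : R) (beta : 'rV[R]_p)
  (hbeta : forall (phi0 : R) (phi : 'rV[R]_p),
     cube_integral (fun x => (f x - affine beta0 beta x) ^+ 2)
       <= cube_integral (fun x => (f x - affine phi0 phi x) ^+ 2))
  (ft : 'rV[R]_p0 -> R) (hft : {within @unit_cube R p0, continuous ft})
  (eta : R) (heta : 0 < eta)
  (hsup : sup [set `|f x - ft (cube_prefix (ltnW hpp0) x)| | x in @unit_cube R p] < eta)
  (tau : R) (htau : 0 < tau)
  (hcorr : forall j : 'I_p, (j < p0)%N ->
     tau < `| cube_integral (fun x => x 0 j * f x) - 2^-1 * cube_integral f |) :
  (forall j : 'I_p, (p0 <= j)%N -> `|beta 0 j| < 12 * eta) /\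
  (forall j : 'I_p, (j < p0)%N -> 12 * tau < `|beta 0 j|).
Proof.
pose fpre x := ft (cube_prefix (ltnW hpp0) x).
have fpre_c : {within @unit_cube R p, continuous fpre} by exact: cube_continuous_prefix.
have dist_c : {within @unit_cube R p, continuous (fun x => `|f x - fpre x|)}.
  by apply: cube_continuous_comp; [exact: cube_continuousB | exact: norm_continuous].
split => j hj.
- have := best_affine_coef_le_dist hf hbeta fpre_c (coord_free_prefix _ _ hj)
    (fun x x01 => cube_continuous_le_sup dist_c x01).
  lra.
- by have := hcorr j hj; rewrite (best_affine_coef_moment hf hbeta) normrM ger0_norm //; lra.
Qed.
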